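(* Let $P$ and $Q$ be rational Herglotz functions vanishing at infinity, i.e. $P(z)=\sum_{j\in J_1}A_j(p_j-z)^{-1}$ and $Q(z)=\sum_{\ell\in J_2}B_\ell(q_\ell-z)^{-1}$ with finite index sets $J_1,J_2$, $A_j\ge 0$, $B_\ell\ge 0$, $p_j,q_\ell\in\mathbb{R}$. Let $\Gamma$ be a closed, clockwise oriented Jordan contour in $\mathbb{C}$ containing no pole of $P$ or $Q$, such that every pole of $P$ or $Q$ lying in the interior of $\Gamma$ is strictly smaller than every pole of $P$ or $Q$ lying in the exterior of $\Gamma$ (i.e. $\Gamma$ encircles some of the poles ''starting from the left''). Then $$\frac{1}{2\pi i}\oint_\Gamma dz\,P(z)Q(z)\ge 0.$$
   Context: A Herglotz function is an analytic function $f:\mathbb{C}_+\to\mathbb{C}$ with $f(\mathbb{C}_+)\subseteq\mathbb{C}_+$, where $\mathbb{C}_+$ is the open upper half-plane. *)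

From Stdlib Require Import Reals List.
From Coquelicot Require Import Coquelicot.
Open Scope R_scope.

(** Rational Herglotz function vanishing at infinity, given by a finite list of
    pairs (A_j, p_j):  z |-> sum_j A_j (p_j - z)^{-1}. *)
Definition ratH (l : list (R * R)) (z : C) : C :=
  fold_right (fun Ap acc => Cplus acc (Cmult (RtoC (fst Ap)) (Cinv (Cminus (RtoC (snd Ap)) z))))
    (RtoC 0) l.

Definition nonneg_coeffs (l : list (R * R)) : Prop :=
  forall A p, In (A, p) l -> 0 <= A.

(** x is a pole of ratH l : some term with pole x has a positive coefficient
    (terms with A_j = 0 vanish identically and give no pole). *)
Definition is_pole (l : list (R * R)) (x : R) : Prop :=
  exists A, In (A, x) l /\ 0 < A.

Definition strictly_increasing (ts : list R) : Prop :=
  forall i, (S i < length ts)%nat -> nth i ts 0 < nth (S i) ts 0.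

(** A piecewise C^1 curve gamma on [t_0, t_n] (ts = [t_0; ...; t_n], n >= 1):
    on each [t_i, t_{i+1}], gamma agrees with a function g_i which is C^1 on R
    with derivative g_i' (gs = list of pairs (g_i, g_i')). *)
Definition piecewise_C1 (gamma : R -> C) (ts : list R)
    (gs : list ((R -> C) * (R -> C))) : Prop :=
  (2 <= length ts)%nat /\ length gs = pred (length ts) /\ strictly_increasing ts /\
  forall i, (i < length gs)%nat ->
    let g := fst (nth i gs (gamma, gamma)) in
    let g' := snd (nth i gs (gamma, gamma)) in
    (forall t, @is_derive R_AbsRing C_R_NormedModule g t (g' t)) /\
    (forall t, continuous g' t) /\
    (forall t, nth i ts 0 <= t <= nth (S i) ts 0 -> gamma t = g t).

Definition t_start (ts : list R) : R := nth 0 ts 0.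
Definition t_end (ts : list R) : R := last ts 0.

Definition jordan_closed (gamma : R -> C) (ts : list R) : Prop :=
  gamma (t_start ts) = gamma (t_end ts) /\
  forall s t, t_start ts <= s < t_end ts -> t_start ts <= t < t_end ts ->
    gamma s = gamma t -> s = t.

Definition contour_integral (ts : list R) (gs : list ((R -> C) * (R -> C)))
    (f : C -> C) : C :=
  fold_right Cplus (RtoC 0)
    (map (fun i =>
       let g := fst (nth i gs (fun _ => RtoC 0, fun _ => RtoC 0)) in
       let g' := snd (nth i gs (fun _ => RtoC 0, fun _ => RtoC 0)) in
       (@RInt C_R_CompleteNormedModule (fun t => Cmult (f (g t)) (g' t))
          (nth i ts 0) (nth (S i) ts 0) : C))
     (seq 0 (length gs))).

Definition on_curve (gamma : R -> C) (ts : list R) (z : C) : Prop :=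
  exists t, t_start ts <= t <= t_end ts /\ gamma t = z.

(** z lies in the exterior (unbounded component of the complement) of the curve:
    z can be joined, by a continuous path avoiding the curve, to a point of
    modulus larger than every point of the curve. *)
Definition in_exterior (gamma : R -> C) (ts : list R) (z : C) : Prop :=
  ~ on_curve gamma ts z /\
  exists p : R -> C,
    (forall s, 0 <= s <= 1 -> continuous p s) /\ p 0 = z /\
    (forall s, 0 <= s <= 1 -> ~ on_curve gamma ts (p s)) /\
    (forall t, t_start ts <= t <= t_end ts -> Cmod (gamma t) < Cmod (p 1)).

(** z lies in the interior (bounded component of the complement) of the curve. *)
Definition in_interior (gamma : R -> C) (ts : list R) (z : C) : Prop :=
  ~ on_curve gamma ts z /\ ~ in_exterior gamma ts z.

(** Clockwise orientation: the winding number (1/2 pi i) \oint dw/(w - z)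
    equals -1 for every point z of the interior. *)
Definition clockwise (gamma : R -> C) (ts : list R)
    (gs : list ((R -> C) * (R -> C))) : Prop :=
  forall z, in_interior gamma ts z ->
    contour_integral ts gs (fun w => Cinv (Cminus w z)) = Cmult (RtoC (-2 * PI)) Ci.

(** By partial fractions, [P Q] is a nonnegative combination of the products
    [1/((p - z)(q - z))] over poles [p, q], and
    [oint dz/((p - z)(q - z)) = (W q - W p)/(q - p)] with [W x = oint dz/(z - x)].
    For the clockwise contour [W x = -2 pi i] inside and [W x = 0] outside, so each term
    is either [0] or [2 pi i/(q - p)] with [p] inside and [q] outside, i.e. [p < q].
    [W] vanishes outside because it is locally constant off the curve (a branch of
    [log((w - z')/(w - z))] is a primitive of the difference) and vanishes beyond the
    curve (a branch of [log(1 - w/z)] is a primitive). *)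

From Stdlib Require Import Reals List Lra Lia FunctionalExtensionality Classical.
From Coquelicot Require Import Coquelicot.
Open Scope R_scope.

Local Notation is_derive_C f t l := (@is_derive R_AbsRing C_R_NormedModule f t l).

Lemma is_derive_Re (f : R -> C) t l :
  is_derive_C f t l -> is_derive (fun s => Re (f s)) t (Re l).
Proof.
  intros Hf. eapply filterdiff_ext_lin.
  - apply (filterdiff_comp f (fun x : C_R_NormedModule => fst x) _
             (fun x : C_R_NormedModule => fst x) Hf).
    apply filterdiff_linear, is_linear_fst.
  - reflexivity.
Qed.

Lemma is_derive_Im (f : R -> C) t l :
  is_derive_C f t l -> is_derive (fun s => Im (f s)) t (Im l).
Proof.
  intros Hf. eapply filterdiff_ext_lin.
  - apply (filterdiff_comp f (fun x : C_R_NormedModule => snd x) _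
             (fun x : C_R_NormedModule => snd x) Hf).
    apply filterdiff_linear, is_linear_snd.
  - reflexivity.
Qed.

Lemma is_derive_C_Re_Im (f : R -> C) t l :
  is_derive (fun s => Re (f s)) t (Re l) -> is_derive (fun s => Im (f s)) t (Im l) ->
  is_derive_C f t l.
Proof.
  intros Hre Him.
  apply (is_derive_ext (fun s => (Re (f s), Im (f s)) : C)).
  { intros s. destruct (f s); reflexivity. }
  destruct l as [a b]. eapply filterdiff_ext_lin.
  - apply (filterdiff_comp_2 (K := R_AbsRing) (W := C_R_NormedModule) _ _
             (fun x y => (x, y)) _ _ (fun x y => (x, y)) Hre Him).
    apply filterdiff_linear. split.
    + reflexivity.
    + reflexivity.
    + exists 1. split; [lra|]. intros [x y]. simpl. rewrite Rmult_1_l. apply Rle_refl.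
  - reflexivity.
Qed.

Lemma is_derive_C_sub_const (f : R -> C) (z : C) t l :
  is_derive_C f t l -> is_derive_C (fun s => f s - z)%C t l.
Proof.
  intros Hf. pose proof (is_derive_minus (V := C_R_NormedModule) _ _ t _ _ Hf
    (is_derive_const (V := C_R_NormedModule) z t)) as H.
  rewrite (minus_zero_r (G := NormedModule.AbelianGroup _ C_R_NormedModule)) in H. exact H.
Qed.

Lemma is_derive_C_const_sub (f : R -> C) (z : C) t l :
  is_derive_C f t l -> is_derive_C (fun s => z - f s)%C t (- l)%C.
Proof.
  intros Hf. pose proof (is_derive_minus (V := C_R_NormedModule) _ _ t _ _
    (is_derive_const (V := C_R_NormedModule) z t) Hf) as H.
  unfold minus in H. rewrite (plus_zero_l (G := NormedModule.AbelianGroup _ C_R_NormedModule)) in H.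
  exact H.
Qed.

Ltac apply_derive H :=
  lazymatch goal with |- @is_derive ?K ?V ?f ?t ?l =>
    refine (eq_ind _ (fun l' => @is_derive K V f t l') H l _) end.

Ltac C_eq := match goal with |- ?a = ?b => change (@eq C a b) end.

Ltac rewrite_derives :=
  repeat match goal with
  | H : is_derive ?h ?x ?l |- context [Derive ?h ?x] => rewrite (is_derive_unique h x l H)
  end.

Lemma is_derive_Cmult (f g : R -> C) t df dg :
  is_derive_C f t df -> is_derive_C g t dg ->
  is_derive_C (fun s => (f s * g s)%C) t (df * g t + f t * dg)%C.
Proof.
  intros Hf Hg.
  set (a := fun s => Re (f s)); set (b := fun s => Im (f s)).
  set (c := fun s => Re (g s)); set (d := fun s => Im (g s)).
  assert (Ha : is_derive a t (Re df)) by exact (is_derive_Re _ _ _ Hf).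
  assert (Hb : is_derive b t (Im df)) by exact (is_derive_Im _ _ _ Hf).
  assert (Hc : is_derive c t (Re dg)) by exact (is_derive_Re _ _ _ Hg).
  assert (Hd : is_derive d t (Im dg)) by exact (is_derive_Im _ _ _ Hg).
  apply is_derive_C_Re_Im.
  - change (is_derive (fun s => a s * c s - b s * d s) t (Re (df * g t + f t * dg)%C)).
    auto_derive; [repeat split; eexists; eassumption|].
    unfold a, b, c, d in *; rewrite_derives. unfold Re, Im; simpl; ring.
  - change (is_derive (fun s => a s * d s + b s * c s) t (Im (df * g t + f t * dg)%C)).
    auto_derive; [repeat split; eexists; eassumption|].
    unfold a, b, c, d in *; rewrite_derives. unfold Re, Im; simpl; ring.
Qed.

Lemma is_derive_Cinv (f : R -> C) t df :
  is_derive_C f t df -> f t <> 0%C ->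
  is_derive_C (fun s => (/ f s)%C) t (- df / (f t * f t))%C.
Proof.
  intros Hf Hnz.
  set (a := fun s => Re (f s)); set (b := fun s => Im (f s)).
  assert (Ha : is_derive a t (Re df)) by exact (is_derive_Re _ _ _ Hf).
  assert (Hb : is_derive b t (Im df)) by exact (is_derive_Im _ _ _ Hf).
  assert (Hn : a t ^ 2 + b t ^ 2 <> 0).
  { unfold a, b. destruct (f t) as [x y]. unfold Re, Im; simpl. intros E. apply Hnz.
    apply injective_projections; simpl; nra. }
  apply is_derive_C_Re_Im.
  - change (is_derive (fun s => a s / (a s ^ 2 + b s ^ 2)) t (Re (- df / (f t * f t))%C)).
    auto_derive; [repeat split; try (eexists; eassumption); exact Hn|].
    unfold a, b in *; rewrite_derives. unfold Re, Im in *; simpl.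
    field. split; intro E; apply Hn; nra.
  - change (is_derive (fun s => - b s / (a s ^ 2 + b s ^ 2)) t (Im (- df / (f t * f t))%C)).
    auto_derive; [repeat split; try (eexists; eassumption); exact Hn|].
    unfold a, b in *; rewrite_derives. unfold Re, Im in *; simpl.
    field. split; intro E; apply Hn; nra.
Qed.

(** A branch of the complex logarithm on the half-plane [Re u > 0]. *)
Definition Clog_rhp (u : C) : C := (ln (Re u ^ 2 + Im u ^ 2) / 2, atan (Im u / Re u)).

Lemma is_derive_Clog_rhp (f : R -> C) t df :
  is_derive_C f t df -> 0 < Re (f t) ->
  is_derive_C (fun s => Clog_rhp (f s)) t (df / f t)%C.
Proof.
  intros Hf Hpos.
  set (a := fun s => Re (f s)); set (b := fun s => Im (f s)).
  assert (Ha : is_derive a t (Re df)) by exact (is_derive_Re _ _ _ Hf).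
  assert (Hb : is_derive b t (Im df)) by exact (is_derive_Im _ _ _ Hf).
  assert (Ha0 : 0 < a t) by exact Hpos.
  assert (Hn : 0 < a t ^ 2 + b t ^ 2) by nra.
  apply is_derive_C_Re_Im.
  - change (is_derive (fun s => ln (a s ^ 2 + b s ^ 2) / 2) t (Re (df / f t)%C)).
    auto_derive; [repeat split; try (eexists; eassumption); exact Hn|].
    unfold a, b in *; rewrite_derives. unfold Re, Im in *; simpl.
    field. lra.
  - change (is_derive (fun s => atan (b s / a s)) t (Im (df / f t)%C)).
    auto_derive; [repeat split; try (eexists; eassumption); lra|].
    unfold a, b in *; rewrite_derives. unfold Re, Im in *; simpl.
    field. split; lra.
Qed.

Lemma continuous_Cmult (f g : R -> C) t :
  continuous f t -> continuous g t -> continuous (fun s => (f s * g s)%C) t.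
Proof.
  intros Hf Hg.
  assert (Hre : forall h : R -> C, continuous h t -> continuous (fun s => Re (h s)) t).
  { intros h Hh. apply (continuous_comp h fst); [exact Hh|].
    destruct (h t); apply continuous_fst. }
  assert (Him : forall h : R -> C, continuous h t -> continuous (fun s => Im (h s)) t).
  { intros h Hh. apply (continuous_comp h snd); [exact Hh|].
    destruct (h t); apply continuous_snd. }
  pose proof (Hre f Hf); pose proof (Him f Hf); pose proof (Hre g Hg); pose proof (Him g Hg).
  apply (continuous_comp_2 (X := C_UniformSpace)
           (fun s => Re (f s) * Re (g s) - Im (f s) * Im (g s))
           (fun s => Re (f s) * Im (g s) + Im (f s) * Re (g s)) pair).
  - apply (continuous_minus (V := R_NormedModule));
      apply (continuous_mult (K := R_AbsRing)); assumption.
  - apply (continuous_plus (V := R_NormedModule));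
      apply (continuous_mult (K := R_AbsRing)); assumption.
  - apply (continuous_ext (fun x : R * R => x)); [now intros [x y]|apply continuous_id].
Qed.

Lemma Cminus_neq0 (a b : C) : a <> b -> (a - b)%C <> 0%C.
Proof. intros Hab E. apply Hab. apply injective_projections; injection E; simpl; lra. Qed.

Lemma scal_C (c : R) (v : C) : scal (V := C_R_CompleteNormedModule) c v = (c * v)%C.
Proof. apply injective_projections; simpl; unfold scal; simpl; unfold mult; simpl; ring. Qed.

Definition two_pi_i : C := (RtoC (2 * PI) * Ci)%C.

Lemma two_pi_i_neq0 : two_pi_i <> 0%C.
Proof.
  unfold two_pi_i. intros E. injection E. intros. pose proof PI_RGT_0. nra.
Qed.

Lemma opp_two_pi_i_neq0 : (- two_pi_i)%C <> 0%C.
Proof.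
  unfold two_pi_i. intros E. injection E. intros. pose proof PI_RGT_0. nra.
Qed.

Definition Csum (F : nat -> C) (k n : nat) : C := fold_right Cplus (RtoC 0) (map F (seq k n)).

Lemma Csum_S F k n : Csum F k (S n) = (F k + Csum F (S k) n)%C.
Proof. reflexivity. Qed.

Lemma Csum_ext F G k n :
  (forall i, (k <= i < k + n)%nat -> F i = G i) -> Csum F k n = Csum G k n.
Proof.
  revert k; induction n as [|n IH]; intros k H; [reflexivity|].
  rewrite !Csum_S, H, (IH (S k)); [reflexivity| |lia]. intros; apply H; lia.
Qed.

Lemma Csum_plus F G k n :
  Csum (fun i => F i + G i)%C k n = (Csum F k n + Csum G k n)%C.
Proof.
  revert k; induction n as [|n IH]; intros k.
  - unfold Csum; simpl. ring.
  - rewrite !Csum_S, IH. ring.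
Qed.

Lemma Csum_scal (c : C) F k n : Csum (fun i => c * F i)%C k n = (c * Csum F k n)%C.
Proof.
  revert k; induction n as [|n IH]; intros k.
  - unfold Csum; simpl. ring.
  - rewrite !Csum_S, IH. ring.
Qed.

Lemma Csum_telescope (F : nat -> C) k n :
  Csum (fun i => F (S i) - F i)%C k n = (F (k + n)%nat - F k)%C.
Proof.
  revert k; induction n as [|n IH]; intros k.
  - unfold Csum; simpl. rewrite Nat.add_0_r. ring.
  - rewrite Csum_S, IH. replace (S k + n)%nat with (k + S n)%nat by lia. ring.
Qed.

Lemma Re_one_minus_pos (u : C) : Cmod u < 1 -> 0 < Re (1 - u)%C.
Proof.
  intros Hu. pose proof (re_le_Cmod u). pose proof (Rle_abs (Re u)).
  unfold Re in *; simpl. lra.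
Qed.

Lemma continuous_Cmod_sub (g : R -> C) (z : C) t :
  continuous g t -> continuous (fun s => Cmod (g s - z)%C) t.
Proof.
  intros Hg. apply (continuous_comp (fun s => (g s - z)%C) Cmod).
  - apply (continuous_minus (V := C_R_NormedModule)); [exact Hg|apply continuous_const].
  - apply (filterlim_norm (V := C_NormedModule)).
Qed.

Lemma dist_pos_compact (g : R -> C) (z : C) a b :
  a <= b -> (forall t, continuous g t) -> (forall t, a <= t <= b -> g t <> z) ->
  exists d, 0 < d /\ forall t, a <= t <= b -> d <= Cmod (g t - z)%C.
Proof.
  intros Hab Hg Hz.
  destruct (continuity_ab_min (fun s => Cmod (g s - z)%C) a b Hab) as [m [Hm Hmab]].
  { intros c _. apply continuity_pt_filterlim, continuous_Cmod_sub, Hg. }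
  exists (Cmod (g m - z)%C). split; [|exact Hm].
  apply Cmod_gt_0. intros E. apply (Hz m Hmab).
  apply injective_projections; injection E; simpl; lra.
Qed.

Lemma finite_min_pos (n : nat) (P : nat -> R -> Prop) :
  (forall i d d', 0 < d' <= d -> P i d -> P i d') ->
  (forall i, (i < n)%nat -> exists d, 0 < d /\ P i d) ->
  exists d, 0 < d /\ forall i, (i < n)%nat -> P i d.
Proof.
  intros Hmono. induction n as [|n IH]; intros Hex.
  - exists 1. split; [lra|intros; lia].
  - destruct IH as [d1 [Hd1 P1]]; [intros; apply Hex; lia|].
    destruct (Hex n ltac:(lia)) as [d2 [Hd2 P2]].
    exists (Rmin d1 d2). split; [apply Rmin_pos; assumption|].
    intros i Hi. destruct (Nat.eq_dec i n) as [->|Hne].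
    + apply (Hmono n d2); [split; [apply Rmin_pos; assumption|apply Rmin_r]|exact P2].
    + apply (Hmono i d1); [split; [apply Rmin_pos; assumption|apply Rmin_l]|apply P1; lia].
Qed.

(** Otherwise, by the IVT, the indicator of [h u <> h a] would take the value [1/2]. *)
Lemma locally_constant_eq (h : R -> C) a b :
  (forall u, exists eta, 0 < eta /\ forall v, Rabs (v - u) < eta -> h v = h u) ->
  a <= b -> h b = h a.
Proof.
  intros Hloc Hab.
  destruct (Ceq_dec (h b) (h a)) as [E|Hne]; [exact E|exfalso].
  set (psi := fun u => if Ceq_dec (h u) (h a) then 0 else 1).
  assert (Hpsi : continuity (fun u => psi u - / 2)).
  { intros u. apply continuity_pt_minus; [|apply continuity_pt_const; intros ? ?; reflexivity].
    intros eps Heps. destruct (Hloc u) as [eta [Heta Hu]].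
    exists eta. split; [exact Heta|]. intros v [_ Hv]. simpl in *. unfold R_dist in *.
    unfold psi. rewrite (Hu v Hv), Rminus_diag, Rabs_R0. exact Heps. }
  destruct (Rle_lt_or_eq_dec a b Hab) as [Hlt|<-]; [|exact (Hne eq_refl)].
  destruct (IVT _ a b Hpsi Hlt) as [x [_ Hx]]; unfold psi in *.
  - destruct (Ceq_dec (h a) (h a)); [lra|congruence].
  - destruct (Ceq_dec (h b) (h a)); [congruence|lra].
  - destruct (Ceq_dec (h x) (h a)); lra.
Qed.

(** Extends paths defined on [[0, 1]] to [R], since [IVT] requires continuity everywhere. *)
Definition clamp01 (u : R) : R := Rmax 0 (Rmin 1 u).

Lemma clamp01_range u : 0 <= clamp01 u <= 1.
Proof. unfold clamp01, Rmax, Rmin. repeat destruct Rle_dec; lra. Qed.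

Lemma clamp01_id u : 0 <= u <= 1 -> clamp01 u = u.
Proof. intros. unfold clamp01, Rmax, Rmin. repeat destruct Rle_dec; lra. Qed.

Lemma clamp01_lipschitz u v : Rabs (clamp01 v - clamp01 u) <= Rabs (v - u).
Proof.
  apply Rabs_le. pose proof (Rle_abs (v - u)). pose proof (Rle_abs (- (v - u))).
  rewrite Rabs_Ropp in *. unfold clamp01, Rmax, Rmin. repeat destruct Rle_dec; lra.
Qed.

Definition piece (gs : list ((R -> C) * (R -> C))) (i : nat) : R -> C :=
  fst (nth i gs (fun _ => RtoC 0, fun _ => RtoC 0)).
Definition piece_deriv (gs : list ((R -> C) * (R -> C))) (i : nat) : R -> C :=
  snd (nth i gs (fun _ => RtoC 0, fun _ => RtoC 0)).

Lemma contour_integral_Csum ts gs f :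
  contour_integral ts gs f =
  Csum (fun i => RInt (V := C_R_CompleteNormedModule)
                   (fun t => f (piece gs i t) * piece_deriv gs i t)%C
                   (nth i ts 0) (nth (S i) ts 0)) 0 (length gs).
Proof. reflexivity. Qed.

Lemma last_nth {A : Type} (l : list A) (d : A) : last l d = nth (pred (length l)) l d.
Proof.
  induction l as [|a [|b l] IH]; [reflexivity|reflexivity|].
  change (last (a :: b :: l) d) with (last (b :: l) d). rewrite IH. reflexivity.
Qed.

Section PiecewiseC1Curve.

Variables (gamma : R -> C) (ts : list R) (gs : list ((R -> C) * (R -> C))).
Hypothesis Hpc : piecewise_C1 gamma ts gs.

Definition on_piece (i : nat) (t : R) : Prop :=
  (i < length gs)%nat /\ nth i ts 0 <= t <= nth (S i) ts 0.

Lemma length_nodes : length ts = S (length gs).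
Proof. destruct Hpc as [H1 [H2 _]]. lia. Qed.

Lemma node_lt i : (i < length gs)%nat -> nth i ts 0 < nth (S i) ts 0.
Proof.
  intros Hi. destruct Hpc as [_ [_ [Hinc _]]]. apply Hinc. rewrite length_nodes. lia.
Qed.

Lemma node_le i j : (i <= j <= length gs)%nat -> nth i ts 0 <= nth j ts 0.
Proof.
  intros [Hij Hj]. induction Hij as [|j Hij IH]; [lra|].
  apply Rle_trans with (nth j ts 0); [apply IH; lia|left; apply node_lt; lia].
Qed.

Lemma t_end_node : t_end ts = nth (length gs) ts 0.
Proof. unfold t_end. rewrite last_nth, length_nodes. reflexivity. Qed.

Lemma piece_spec i : (i < length gs)%nat ->
  (forall t, is_derive_C (piece gs i) t (piece_deriv gs i t)) /\
  (forall t, continuous (piece_deriv gs i) t) /\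
  (forall t, nth i ts 0 <= t <= nth (S i) ts 0 -> gamma t = piece gs i t).
Proof.
  intros Hi. destruct Hpc as [_ [_ [_ H]]]. specialize (H i Hi). simpl in H.
  unfold piece, piece_deriv. rewrite (nth_indep gs _ (gamma, gamma) Hi). exact H.
Qed.

Lemma is_derive_piece i t : (i < length gs)%nat ->
  is_derive_C (piece gs i) t (piece_deriv gs i t).
Proof. intros Hi. apply (piece_spec i Hi). Qed.

Lemma continuous_piece_deriv i t : (i < length gs)%nat -> continuous (piece_deriv gs i) t.
Proof. intros Hi. apply (piece_spec i Hi). Qed.

Lemma continuous_piece i t : (i < length gs)%nat -> continuous (piece gs i) t.
Proof.
  intros Hi. apply (ex_derive_continuous (V := C_R_NormedModule)).
  eexists. apply is_derive_piece, Hi.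
Qed.

Lemma gamma_on_piece i t : on_piece i t -> gamma t = piece gs i t.
Proof. intros [Hi Ht]. apply (piece_spec i Hi), Ht. Qed.

Lemma on_piece_range i t : on_piece i t -> t_start ts <= t <= t_end ts.
Proof.
  intros [Hi Ht]. rewrite t_end_node. unfold t_start.
  pose proof (node_le 0 i ltac:(lia)). pose proof (node_le (S i) (length gs) ltac:(lia)).
  lra.
Qed.

Lemma on_piece_cover t : t_start ts <= t <= t_end ts -> exists i, on_piece i t.
Proof.
  rewrite t_end_node. unfold t_start. intros Ht.
  assert (Hgs : (0 < length gs)%nat) by (destruct Hpc as [H1 [H2 _]]; lia).
  assert (Hn : forall n, (0 < n <= length gs)%nat -> t <= nth n ts 0 ->
            exists i, (i < n)%nat /\ nth i ts 0 <= t <= nth (S i) ts 0).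
  { induction n as [|n IH]; intros Hn Hle; [lia|].
    destruct (Rle_lt_dec (nth n ts 0) t).
    - exists n; split; [lia|lra].
    - destruct n as [|n]; [lra|].
      destruct (IH ltac:(lia) ltac:(lra)) as [i [Hi Hit]]. exists i; split; [lia|exact Hit]. }
  destruct (Hn (length gs) ltac:(lia) ltac:(lra)) as [i [Hi Hit]].
  exists i. split; assumption.
Qed.

Lemma piece_off_curve z i t : ~ on_curve gamma ts z -> on_piece i t -> piece gs i t <> z.
Proof.
  intros Hz Ht E. apply Hz. exists t. split; [apply (on_piece_range i), Ht|].
  rewrite (gamma_on_piece i t Ht). exact E.
Qed.

Definition contour_integrable (f : C -> C) : Prop :=
  forall i t, on_piece i t ->
  continuous (fun s => f (piece gs i s) * piece_deriv gs i s)%C t.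

Lemma contour_integrable_derivable f :
  (forall i t, on_piece i t -> exists l, is_derive_C (fun s => f (piece gs i s)) t l) ->
  contour_integrable f.
Proof.
  intros Hd i t Ht. apply continuous_Cmult.
  - destruct (Hd i t Ht) as [l Hl].
    apply (ex_derive_continuous (V := C_R_NormedModule)). exists l. exact Hl.
  - apply continuous_piece_deriv, Ht.
Qed.

Lemma contour_integrable_plus f g :
  contour_integrable f -> contour_integrable g -> contour_integrable (fun z => f z + g z)%C.
Proof.
  intros Hf Hg i t Ht.
  apply (continuous_ext (fun s => f (piece gs i s) * piece_deriv gs i s
                               + g (piece gs i s) * piece_deriv gs i s)%C).
  - intros s. C_eq. ring.
  - apply (continuous_plus (V := C_R_NormedModule)); [apply Hf|apply Hg]; exact Ht.
Qed.

Lemma contour_integrable_scal (c : R) f :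
  contour_integrable f -> contour_integrable (fun z => c * f z)%C.
Proof.
  intros Hf i t Ht.
  apply (continuous_ext (fun s => c * (f (piece gs i s) * piece_deriv gs i s))%C).
  - intros s. C_eq. ring.
  - apply continuous_Cmult; [apply continuous_const|apply Hf, Ht].
Qed.

Lemma ex_RInt_piece f i : contour_integrable f -> (i < length gs)%nat ->
  ex_RInt (V := C_R_CompleteNormedModule)
    (fun t => f (piece gs i t) * piece_deriv gs i t)%C (nth i ts 0) (nth (S i) ts 0).
Proof.
  intros Hf Hi. apply ex_RInt_continuous. intros t Ht.
  pose proof (node_lt i Hi). rewrite Rmin_left, Rmax_right in Ht by lra.
  apply Hf. split; assumption.
Qed.

Lemma contour_integral_plus f g : contour_integrable f -> contour_integrable g ->
  contour_integral ts gs (fun z => f z + g z)%C =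
  (contour_integral ts gs f + contour_integral ts gs g)%C.
Proof.
  intros Hf Hg. rewrite !contour_integral_Csum, <- Csum_plus. apply Csum_ext.
  intros i Hi. rewrite <- (RInt_plus (V := C_R_CompleteNormedModule))
    by (apply ex_RInt_piece; [assumption|lia]).
  apply (RInt_ext (V := C_R_CompleteNormedModule)). intros t _.
  change (plus ?a ?b) with (Cplus a b). C_eq. ring.
Qed.

Lemma contour_integral_scal (c : R) f : contour_integrable f ->
  contour_integral ts gs (fun z => c * f z)%C = (c * contour_integral ts gs f)%C.
Proof.
  intros Hf. rewrite !contour_integral_Csum, <- Csum_scal. apply Csum_ext.
  intros i Hi.
  rewrite <- scal_C, <- RInt_scal by (apply ex_RInt_piece; [assumption|lia]).
  apply (RInt_ext (V := C_R_CompleteNormedModule)). intros t _.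
  rewrite scal_C. C_eq. ring.
Qed.

Lemma contour_integral_ext f g :
  (forall i t, (i < length gs)%nat -> nth i ts 0 < t < nth (S i) ts 0 ->
     f (piece gs i t) = g (piece gs i t)) ->
  contour_integral ts gs f = contour_integral ts gs g.
Proof.
  intros E. rewrite !contour_integral_Csum. apply Csum_ext. intros i Hi.
  pose proof (node_lt i ltac:(lia)).
  apply (RInt_ext (V := C_R_CompleteNormedModule)).
  rewrite Rmin_left, Rmax_right by lra. intros t Ht.
  rewrite E by (lia || lra). reflexivity.
Qed.

Lemma dist_curve_pos z : ~ on_curve gamma ts z ->
  exists d, 0 < d /\ forall t, t_start ts <= t <= t_end ts -> d <= Cmod (gamma t - z)%C.
Proof.
  intros Hz.
  destruct (finite_min_pos (length gs)
    (fun i d => forall t, nth i ts 0 <= t <= nth (S i) ts 0 -> d <= Cmod (piece gs i t - z)%C))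
    as [d [Hd Hpd]].
  - intros i d d' Hd' H t Ht. specialize (H t Ht). lra.
  - intros i Hi. apply dist_pos_compact.
    + left. apply node_lt, Hi.
    + intros t. apply continuous_piece, Hi.
    + intros t Ht. apply piece_off_curve; [exact Hz|split; assumption].
  - exists d. split; [exact Hd|]. intros t Ht.
    destruct (on_piece_cover t Ht) as [i [Hi Hit]].
    rewrite (gamma_on_piece i t) by (split; assumption). apply Hpd; assumption.
Qed.

Definition winding_integral (z : C) : C := contour_integral ts gs (fun w => / (w - z))%C.

Lemma is_derive_inv_sub_piece z i t : on_piece i t -> piece gs i t <> z ->
  is_derive_C (fun s => / (piece gs i s - z))%C t
    (- piece_deriv gs i t / ((piece gs i t - z) * (piece gs i t - z)))%C.
Proof.
  intros [Hi _] Hz. apply (is_derive_Cinv (fun s => piece gs i s - z)%C).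
  - apply is_derive_C_sub_const, is_derive_piece, Hi.
  - apply Cminus_neq0, Hz.
Qed.

Lemma contour_integrable_inv_sub z :
  ~ on_curve gamma ts z -> contour_integrable (fun w => / (w - z))%C.
Proof.
  intros Hz. apply contour_integrable_derivable. intros i t Ht. eexists.
  apply is_derive_inv_sub_piece; [exact Ht|apply piece_off_curve; assumption].
Qed.

Section ClosedCurve.

Hypothesis Hcl : gamma (t_start ts) = gamma (t_end ts).

(** The fundamental theorem of calculus on each piece, telescoped along the closed curve. *)
Lemma contour_integral_primitive f (F : C -> C) :
  contour_integrable f ->
  (forall i t, on_piece i t ->
     is_derive_C (fun s => F (piece gs i s)) t (f (piece gs i t) * piece_deriv gs i t)%C) ->
  contour_integral ts gs f = 0%C.
Proof.
  intros Hf HF. rewrite contour_integral_Csum.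
  rewrite (Csum_ext _ (fun i => F (gamma (nth (S i) ts 0)) - F (gamma (nth i ts 0)))%C).
  - rewrite (Csum_telescope (fun i => F (gamma (nth i ts 0)))). simpl.
    rewrite <- t_end_node. fold (t_start ts). rewrite Hcl. ring.
  - intros i Hi. simpl in Hi. assert (Hi' : (i < length gs)%nat) by lia.
    pose proof (node_lt i Hi').
    rewrite (gamma_on_piece i (nth i ts 0)) by (split; [assumption|lra]).
    rewrite (gamma_on_piece i (nth (S i) ts 0)) by (split; [assumption|lra]).
    apply (is_RInt_unique (V := C_R_CompleteNormedModule)).
    apply (is_RInt_derive (V := C_R_CompleteNormedModule) (fun s => F (piece gs i s)));
      rewrite Rmin_left, Rmax_right by lra; intros t Ht.
    + apply HF. split; assumption.
    + apply Hf. split; assumption.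
Qed.

(** [Clog_rhp ((w - z') / (w - z))] is a primitive of [1/(w - z') - 1/(w - z)] along the curve. *)
Lemma winding_integral_eq_of_Re_pos z z' :
  ~ on_curve gamma ts z -> ~ on_curve gamma ts z' ->
  (forall i t, on_piece i t -> 0 < Re ((piece gs i t - z') / (piece gs i t - z))%C) ->
  winding_integral z' = winding_integral z.
Proof.
  intros Hz Hz' Hre.
  pose proof (contour_integrable_inv_sub z Hz) as Hint.
  pose proof (contour_integrable_inv_sub z' Hz') as Hint'.
  assert (H0 : contour_integral ts gs (fun w => / (w - z') + RtoC (-1) * / (w - z))%C = 0%C).
  { apply (contour_integral_primitive (fun w => / (w - z') + RtoC (-1) * / (w - z))%C
             (fun w => Clog_rhp ((w - z') / (w - z))%C)).
    - apply contour_integrable_plus; [|apply contour_integrable_scal]; assumption.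
    - intros i t Ht.
      pose proof (piece_off_curve z i t Hz Ht) as Hnz.
      pose proof (piece_off_curve z' i t Hz' Ht) as Hnz'.
      pose proof (is_derive_C_sub_const _ z' t _ (is_derive_piece i t (proj1 Ht))) as H1.
      pose proof (is_derive_inv_sub_piece z i t Ht Hnz) as H2.
      pose proof (is_derive_Cmult _ _ t _ _ H1 H2) as Hq.
      pose proof (is_derive_Clog_rhp _ t _ Hq (Hre i t Ht)) as Hlog.
      apply_derive Hlog.
      apply Cminus_neq0 in Hnz, Hnz'. C_eq. field. split; assumption. }
  rewrite contour_integral_plus, contour_integral_scal in H0;
    [|exact Hint|exact Hint'|apply contour_integrable_scal, Hint].
  fold (winding_integral z) (winding_integral z') in H0.
  destruct (winding_integral z') as [a b], (winding_integral z) as [c d].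
  injection H0. intros. apply injective_projections; simpl in *; lra.
Qed.

(** [Clog_rhp (1 - w / z)] is a primitive of [1/(w - z)] along the curve. *)
Lemma winding_integral_eq0_of_Re_pos (z : C) : z <> 0%C -> ~ on_curve gamma ts z ->
  (forall i t, on_piece i t -> 0 < Re (1 - piece gs i t / z)%C) ->
  winding_integral z = 0%C.
Proof.
  intros Hz0 Hz Hre.
  apply (contour_integral_primitive (fun w => / (w - z))%C (fun w => Clog_rhp (1 - w / z))%C).
  - apply contour_integrable_inv_sub, Hz.
  - intros i t Ht.
    pose proof (piece_off_curve z i t Hz Ht) as Hnz.
    pose proof (is_derive_Cmult (piece gs i) (fun _ => / z)%C t _ _
      (is_derive_piece i t (proj1 Ht)) (is_derive_const (V := C_R_NormedModule) _ t)) as Hq.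
    pose proof (is_derive_C_const_sub _ 1%C t _ Hq) as H1.
    pose proof (is_derive_Clog_rhp _ t _ H1 (Hre i t Ht)) as Hlog.
    change (@zero ?G) with (RtoC 0) in Hlog.
    apply_derive Hlog.
    assert (H1z : (1 - piece gs i t / z)%C <> 0%C).
    { intros E. specialize (Hre i t Ht). rewrite E in Hre. simpl in Hre. lra. }
    pose proof (Cminus_neq0 _ _ (not_eq_sym Hnz)). apply Cminus_neq0 in Hnz.
    C_eq. field. repeat split; assumption.
Qed.

Lemma winding_integral_local (z z' : C) : ~ on_curve gamma ts z ->
  (forall t, t_start ts <= t <= t_end ts -> Cmod (z' - z)%C < Cmod (gamma t - z)%C) ->
  winding_integral z' = winding_integral z.
Proof.
  intros Hz Hclose.
  assert (Hz' : ~ on_curve gamma ts z').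
  { intros [t [Ht E]]. specialize (Hclose t Ht). rewrite E in Hclose. lra. }
  apply winding_integral_eq_of_Re_pos; [exact Hz|exact Hz'|].
  intros i t Ht.
  specialize (Hclose t (on_piece_range i t Ht)). rewrite (gamma_on_piece i t Ht) in Hclose.
  pose proof (Cminus_neq0 _ _ (piece_off_curve z i t Hz Ht)) as Hnz.
  replace ((piece gs i t - z') / (piece gs i t - z))%C
    with (1 - (z' - z) / (piece gs i t - z))%C by (C_eq; field; exact Hnz).
  apply Re_one_minus_pos. unfold Cdiv. rewrite Cmod_mult, Cmod_inv by exact Hnz.
  pose proof (proj1 (Cmod_gt_0 _) Hnz).
  apply (Rmult_lt_reg_r (Cmod (piece gs i t - z)%C)); [assumption|].
  rewrite Rmult_assoc, Rinv_l by lra. lra.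
Qed.

Lemma winding_integral_far (z : C) :
  (forall t, t_start ts <= t <= t_end ts -> Cmod (gamma t) < Cmod z) ->
  winding_integral z = 0%C.
Proof.
  intros Hfar.
  assert (Hz : ~ on_curve gamma ts z).
  { intros [t [Ht E]]. specialize (Hfar t Ht). rewrite E in Hfar. lra. }
  assert (Hz0 : z <> 0%C).
  { intros E. assert (Hs : t_start ts <= t_start ts <= t_end ts).
    { rewrite t_end_node. unfold t_start. split; [lra|apply node_le; lia]. }
    specialize (Hfar _ Hs). rewrite E, Cmod_0 in Hfar.
    pose proof (Cmod_ge_0 (gamma (t_start ts))). lra. }
  apply winding_integral_eq0_of_Re_pos; [exact Hz0|exact Hz|].
  intros i t Ht. apply Re_one_minus_pos.
  specialize (Hfar t (on_piece_range i t Ht)). rewrite (gamma_on_piece i t Ht) in Hfar.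
  unfold Cdiv. rewrite Cmod_mult, Cmod_inv by exact Hz0.
  pose proof (proj1 (Cmod_gt_0 _) Hz0).
  apply (Rmult_lt_reg_r (Cmod z)); [assumption|].
  rewrite Rmult_assoc, Rinv_l by lra. lra.
Qed.

Lemma winding_integral_exterior (z : C) : in_exterior gamma ts z -> winding_integral z = 0%C.
Proof.
  intros [_ [p [Hp [Hp0 [Hoff Hfar]]]]].
  set (q := fun u => p (clamp01 u)).
  assert (Hq : forall u, ~ on_curve gamma ts (q u)) by (intros u; apply Hoff, clamp01_range).
  assert (Hsqrt2 : sqrt 2 < 2).
  { pose proof (sqrt_pos 2). pose proof (sqrt_sqrt 2 ltac:(lra)). nra. }
  assert (Hloc : forall u, exists eta, 0 < eta /\
            forall v, Rabs (v - u) < eta -> winding_integral (q v) = winding_integral (q u)).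
  { intros u. destruct (dist_curve_pos (q u) (Hq u)) as [d [Hd Hdist]].
    pose proof (proj1 (filterlim_locally _ _) (Hp _ (clamp01_range u))
                  (mkposreal (d / 2) ltac:(lra))) as [eta Heta].
    exists eta. split; [apply cond_pos|]. intros v Hv.
    apply winding_integral_local; [apply Hq|]. intros t Ht.
    assert (Hball : Cmod (q v - q u)%C < sqrt 2 * (d / 2)).
    { apply (C_NormedModule_mixin_compat2 _ _ (mkposreal (d / 2) ltac:(lra))), Heta.
      apply (Rle_lt_trans _ _ _ (clamp01_lipschitz u v) Hv). }
    specialize (Hdist t Ht). nra. }
  replace z with (q 0) by (unfold q; rewrite clamp01_id by lra; exact Hp0).
  rewrite <- (locally_constant_eq (fun u => winding_integral (q u)) 0 1 Hloc) by lra.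
  apply winding_integral_far. unfold q. rewrite clamp01_id by lra. exact Hfar.
Qed.

Lemma winding_integral_cases (z : C) : clockwise gamma ts gs -> ~ on_curve gamma ts z ->
  (in_exterior gamma ts z /\ winding_integral z = 0%C) \/
  (in_interior gamma ts z /\ winding_integral z = (- two_pi_i)%C).
Proof.
  intros Hcw Hz. destruct (classic (in_exterior gamma ts z)) as [Hext|Hnext].
  - left. split; [exact Hext|apply winding_integral_exterior, Hext].
  - right. assert (Hin : in_interior gamma ts z) by (split; assumption).
    split; [exact Hin|]. unfold winding_integral. rewrite (Hcw z Hin).
    unfold two_pi_i. apply injective_projections; simpl; ring.
Qed.

Definition integral_nonneg_2pi_i (f : C -> C) : Prop :=
  contour_integrable f /\
  exists r, 0 <= r /\ contour_integral ts gs f = (RtoC r * two_pi_i)%C.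

Lemma integral_nonneg_2pi_i_zero : integral_nonneg_2pi_i (fun _ => RtoC 0).
Proof.
  assert (Hd : forall i t, on_piece i t ->
            is_derive_C (fun _ : R => RtoC 0) t (RtoC 0 * piece_deriv gs i t)%C).
  { intros i t _. rewrite Cmult_0_l. apply (is_derive_const (V := C_R_NormedModule)). }
  assert (Hint : contour_integrable (fun _ => RtoC 0)).
  { apply contour_integrable_derivable. intros i t Ht. eexists. apply (Hd i t Ht). }
  split; [exact Hint|]. exists 0. split; [lra|].
  rewrite (contour_integral_primitive _ (fun _ => RtoC 0) Hint Hd). C_eq. ring.
Qed.

Lemma integral_nonneg_2pi_i_plus f g :
  integral_nonneg_2pi_i f -> integral_nonneg_2pi_i g ->
  integral_nonneg_2pi_i (fun z => f z + g z)%C.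
Proof.
  intros [Hf [r [Hr Ef]]] [Hg [s [Hs Eg]]].
  split; [apply contour_integrable_plus; assumption|].
  exists (r + s). split; [lra|].
  rewrite contour_integral_plus, Ef, Eg by assumption. rewrite RtoC_plus. ring.
Qed.

Lemma integral_nonneg_2pi_i_scal (c : R) f : 0 <= c ->
  integral_nonneg_2pi_i f -> integral_nonneg_2pi_i (fun z => c * f z)%C.
Proof.
  intros Hc [Hf [r [Hr Ef]]].
  split; [apply contour_integrable_scal, Hf|].
  exists (c * r). split; [apply Rmult_le_pos; assumption|].
  rewrite contour_integral_scal, Ef by assumption. rewrite RtoC_mult. ring.
Qed.

Lemma integral_nonneg_2pi_i_ext f g :
  (forall z, f z = g z) -> integral_nonneg_2pi_i f -> integral_nonneg_2pi_i g.
Proof. intros E. replace g with f by (apply functional_extensionality, E). tauto. Qed.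

Definition simple_pole_product (p q : R) (z : C) : C := (/ (p - z) * / (q - z))%C.

Lemma contour_integrable_simple_pole_product (p q : R) :
  ~ on_curve gamma ts p -> ~ on_curve gamma ts q ->
  contour_integrable (simple_pole_product p q).
Proof.
  intros Hp Hq. apply contour_integrable_derivable. intros i t Ht.
  pose proof (piece_off_curve p i t Hp Ht) as Hnp.
  pose proof (piece_off_curve q i t Hq Ht) as Hnq.
  eexists. apply is_derive_Cmult; apply is_derive_Cinv;
    try (apply is_derive_C_const_sub, is_derive_piece, (proj1 Ht));
    apply Cminus_neq0; congruence.
Qed.

Lemma contour_integral_double_pole (p : R) :
  ~ on_curve gamma ts p -> contour_integral ts gs (simple_pole_product p p) = 0%C.
Proof.
  intros Hp.
  apply (contour_integral_primitive _ (fun w => / (p - w))%C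
           (contour_integrable_simple_pole_product p p Hp Hp)).
  intros i t Ht.
  pose proof (Cminus_neq0 _ _ (not_eq_sym (piece_off_curve p i t Hp Ht))) as Hnp.
  apply_derive (is_derive_Cinv _ t _
    (is_derive_C_const_sub _ p t _ (is_derive_piece i t (proj1 Ht))) Hnp).
  unfold simple_pole_product. C_eq. field. exact Hnp.
Qed.

(** Partial fractions: [1/((p - z)(q - z)) = (1/(z - q) - 1/(z - p)) / (q - p)]. *)
Lemma contour_integral_simple_pole_product (p q : R) :
  ~ on_curve gamma ts p -> ~ on_curve gamma ts q -> p <> q ->
  contour_integral ts gs (simple_pole_product p q) =
  (RtoC (/ (q - p)) * (winding_integral q - winding_integral p))%C.
Proof.
  intros Hp Hq Hpq.
  pose proof (contour_integrable_inv_sub p Hp) as Hint_p.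
  pose proof (contour_integrable_inv_sub q Hq) as Hint_q.
  transitivity (contour_integral ts gs
    (fun w => RtoC (/ (q - p)) * (/ (w - q) + RtoC (-1) * / (w - p)))%C).
  - apply contour_integral_ext. intros i t Hi Ht.
    assert (Ht' : on_piece i t) by (split; [exact Hi|lra]).
    pose proof (Cminus_neq0 _ _ (piece_off_curve p i t Hp Ht')).
    pose proof (Cminus_neq0 _ _ (piece_off_curve q i t Hq Ht')).
    pose proof (Cminus_neq0 _ _ (not_eq_sym (piece_off_curve p i t Hp Ht'))).
    pose proof (Cminus_neq0 _ _ (not_eq_sym (piece_off_curve q i t Hq Ht'))).
    assert (Hqp : RtoC (q - p) <> 0%C) by (intros E; injection E; lra).
    unfold simple_pole_product. rewrite RtoC_inv, RtoC_minus in * by lra.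
    C_eq. field. repeat split; assumption.
  - rewrite contour_integral_scal, contour_integral_plus, contour_integral_scal;
      [|exact Hint_p|exact Hint_q|apply contour_integrable_scal, Hint_p
       |apply contour_integrable_plus; [exact Hint_q|apply contour_integrable_scal, Hint_p]].
    unfold winding_integral. C_eq. ring.
Qed.

Section Poles.

Variable pole : R -> Prop.
Hypothesis pole_off_curve : forall x, pole x -> ~ on_curve gamma ts x.
Hypothesis pole_winding : forall x, pole x ->
  winding_integral x = 0%C \/ winding_integral x = (- two_pi_i)%C.
Hypothesis pole_order : forall x y, pole x -> pole y ->
  winding_integral x = (- two_pi_i)%C -> winding_integral y = 0%C -> x < y.

(** Only an encircled [p] paired with a non-encircled [q] contributes: [2 pi i / (q - p)]. *)
Lemma integral_nonneg_2pi_i_simple_pole_product (p q : R) :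
  pole p -> pole q -> integral_nonneg_2pi_i (simple_pole_product p q).
Proof.
  intros Hp Hq.
  split; [apply contour_integrable_simple_pole_product; apply pole_off_curve; assumption|].
  destruct (Req_dec p q) as [<-|Hpq].
  { exists 0. split; [lra|]. rewrite contour_integral_double_pole by auto. C_eq. ring. }
  rewrite contour_integral_simple_pole_product by auto.
  destruct (pole_winding p Hp) as [Wp|Wp], (pole_winding q Hq) as [Wq|Wq];
    rewrite Wp, Wq.
  - exists 0. split; [lra|]. C_eq. ring.
  - exists (/ (p - q)). pose proof (pole_order q p Hq Hp Wq Wp).
    split; [apply Rlt_le, Rinv_0_lt_compat; lra|].
    rewrite !RtoC_inv, !RtoC_minus by lra. C_eq. field.
    split; intros E; injection E; lra.
  - exists (/ (q - p)). pose proof (pole_order p q Hp Hq Wp Wq).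
    split; [apply Rlt_le, Rinv_0_lt_compat; lra|].
    rewrite !RtoC_inv, !RtoC_minus by lra. C_eq. field. intros E; injection E; lra.
  - exists 0. split; [lra|]. C_eq. ring.
Qed.

Lemma integral_nonneg_2pi_i_ratH_mul (l : list (R * R)) (g : C -> C) :
  nonneg_coeffs l ->
  (forall A p, In (A, p) l -> 0 < A -> integral_nonneg_2pi_i (fun z => / (p - z) * g z)%C) ->
  integral_nonneg_2pi_i (fun z => ratH l z * g z)%C.
Proof.
  induction l as [|[A p] l IH]; intros Hl Hterm.
  - apply (integral_nonneg_2pi_i_ext (fun _ => RtoC 0));
      [intros z; simpl; C_eq; ring|apply integral_nonneg_2pi_i_zero].
  - assert (IH' : integral_nonneg_2pi_i (fun z => ratH l z * g z)%C).
    { apply IH; intros A' p' H; [apply (Hl A' p')|apply Hterm]; right; exact H. }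
    assert (HA : 0 <= A) by (apply (Hl A p); left; reflexivity).
    destruct (Rle_lt_or_eq_dec _ _ HA) as [HA'|<-].
    + apply (integral_nonneg_2pi_i_ext
               (fun z => ratH l z * g z + A * (/ (p - z) * g z))%C);
        [intros z; simpl; C_eq; ring|].
      apply integral_nonneg_2pi_i_plus; [exact IH'|].
      apply (integral_nonneg_2pi_i_scal A (fun z => / (p - z) * g z)%C HA).
      apply (Hterm A p); [left; reflexivity|exact HA'].
    + apply (integral_nonneg_2pi_i_ext (fun z => ratH l z * g z)%C);
        [intros z; simpl; C_eq; ring|exact IH'].
Qed.

Lemma integral_nonneg_2pi_i_ratH_ratH (lP lQ : list (R * R)) :
  nonneg_coeffs lP -> nonneg_coeffs lQ ->
  (forall x, is_pole lP x -> pole x) -> (forall x, is_pole lQ x -> pole x) ->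
  integral_nonneg_2pi_i (fun z => ratH lP z * ratH lQ z)%C.
Proof.
  intros HP HQ HpoleP HpoleQ.
  apply integral_nonneg_2pi_i_ratH_mul; [exact HP|]. intros A p HAp HA.
  apply (integral_nonneg_2pi_i_ext (fun z => ratH lQ z * / (p - z))%C);
    [intros z; C_eq; ring|].
  apply integral_nonneg_2pi_i_ratH_mul; [exact HQ|]. intros B q HBq HB.
  apply (integral_nonneg_2pi_i_ext (simple_pole_product q p));
    [intros z; unfold simple_pole_product; C_eq; ring|].
  apply integral_nonneg_2pi_i_simple_pole_product.
  - apply HpoleQ. exists B. split; assumption.
  - apply HpoleP. exists A. split; assumption.
Qed.

End Poles.

End ClosedCurve.

End PiecewiseC1Curve.

Theorem lemma2p1 (lP lQ : list (R * R)) (gamma : R -> C) (ts : list R)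
    (gs : list ((R -> C) * (R -> C))) :
  nonneg_coeffs lP -> nonneg_coeffs lQ ->
  piecewise_C1 gamma ts gs -> jordan_closed gamma ts -> clockwise gamma ts gs ->
  (forall x, (is_pole lP x \/ is_pole lQ x) -> ~ on_curve gamma ts (RtoC x)) ->
  (forall x y, (is_pole lP x \/ is_pole lQ x) -> (is_pole lP y \/ is_pole lQ y) ->
     in_interior gamma ts (RtoC x) -> in_exterior gamma ts (RtoC y) -> (x < y)%R) ->
  let w := Cdiv (contour_integral ts gs (fun z => Cmult (ratH lP z) (ratH lQ z)))
                (Cmult (RtoC (2 * PI)) Ci) in
  Im w = 0%R /\ (0 <= Re w)%R.
Proof.
  intros HP HQ Hpc [Hcl _] Hcw Hoff Horder w.
  set (pole := fun x => is_pole lP x \/ is_pole lQ x).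
  pose proof (fun (x : R) Hx => winding_integral_cases gamma ts gs Hpc Hcl x Hcw (Hoff x Hx))
    as Hwind.
  destruct (integral_nonneg_2pi_i_ratH_ratH gamma ts gs Hpc Hcl pole Hoff) with lP lQ
    as [_ [r [Hr Hint]]];
    [| |exact HP|exact HQ|intros x Hx; left; exact Hx|intros x Hx; right; exact Hx|].
  - intros x Hx. destruct (Hwind x Hx) as [[_ W]|[_ W]]; [left|right]; exact W.
  - intros x y Hx Hy Wx Wy. apply Horder; [exact Hx|exact Hy| |].
    + destruct (Hwind x Hx) as [[_ W]|[Hin _]]; [|exact Hin].
      rewrite W in Wx. contradiction (opp_two_pi_i_neq0 (eq_sym Wx)).
    + destruct (Hwind y Hy) as [[Hext _]|[_ W]]; [exact Hext|].
      rewrite W in Wy. contradiction (opp_two_pi_i_neq0 Wy).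
  - assert (Hw : w = RtoC r).
    { unfold w. rewrite Hint. fold two_pi_i. C_eq. field. exact two_pi_i_neq0. }
    rewrite Hw. simpl. split; [reflexivity|exact Hr].
Qed.
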